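(* Let $\hat v\in\{0,1\}^{\mathcal T}$ be the indicator vector of a proper triple set. Then the optimal objective value of the linear program $\mathrm{LP}(\hat v)$: minimize $\sum_{J\in\mathcal N}\beta_J y_J$ over $y\in[0,1]^{\mathcal N}$ subject to, for every triple $t=(J,J',J'')\in\mathcal T$, $y_{J''}-y_J\le 1-\hat v_t$, $y_{J''}-y_{J'}\le 1-\hat v_t$, $y_J+y_{J'}-y_{J''}\le 2-\hat v_t$, lies in the interval $[-\eta,0]$, where $\eta=-\sum_{i=1}^m\min(0,\alpha_i)$.
   Context: A multilinear program has data $n,m$, coefficients $\alpha_i\in\mathbb{R}$ and nonempty index sets $J_i\subseteq[n]$ ($i\in[m]$). Let $\mathcal N=\bigcup_i\{J:\emptyset\ne J\subseteq J_i\}$, and for $J\in\mathcal N$ let $\beta_J=\sum_{i: J_i=J}\alpha_i$ (so $\sum_J\beta_Jy_J=\sum_i\alpha_iy_{J_i}$). A triple is $t=(J,J',J'')$ with $J''\in\mathcal N$, $|J''|\ge2$, $J,J'$ nonempty, disjoint, $J\cup J'=J''$, listed with $J,J'$ in lexicographic order ($\mathsf{tail1}(t)=J$, $\mathsf{tail2}(t)=J'$, $\mathsf{head}(t)=J''$); $\mathcal T$ is the set of all triples. A proper triple set is a set $T\subseteq\mathcal T$ containing a subset $T'$ such that (1) every $J_i$ with $|J_i|>1$ is the head of some triple in $T'$, and (2) whenever a set $J$ with $|J|>1$ is the first or second element of a triple in $T'$, $J$ is the head of a different triple in $T'$. Its indicator vector has $\hat v_t=1$ iff $t\in T$. *)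

From HB Require Import structures.
From mathcomp Require Import all_boot all_order all_algebra.
From mathcomp Require Import reals.
Set Implicit Arguments. Unset Strict Implicit. Unset Printing Implicit Defensive.
Import Order.TTheory GRing.Theory Num.Theory.
Local Open Scope ring_scope.

Section MLP.
Variables (n m : nat) (Js : 'I_m -> {set 'I_n}).

Fixpoint lexlt (s t : seq nat) : bool :=
  match s, t with
  | _, [::] => false
  | [::], _ :: _ => true
  | a :: s', b :: t' => (a < b)%N || ((a == b) && lexlt s' t')
  end.

Definition set_lexlt (A B : {set 'I_n}) : bool :=
  lexlt (sort leq [seq val i | i <- enum A]) (sort leq [seq val i | i <- enum B]).

Definition inN (J : {set 'I_n}) : bool := (J != set0) && [exists i, J \subset Js i].

Definition beta (R : numDomainType) (alpha : 'I_m -> R) (J : {set 'I_n}) : R :=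
  \sum_(i | Js i == J) alpha i.

Definition triple := ({set 'I_n} * {set 'I_n} * {set 'I_n})%type.
Definition tail1 (t : triple) : {set 'I_n} := t.1.1.
Definition tail2 (t : triple) : {set 'I_n} := t.1.2.
Definition head (t : triple) : {set 'I_n} := t.2.

Definition is_triple (t : triple) : bool :=
  [&& inN (head t), (2 <= #|head t|)%N, tail1 t != set0, tail2 t != set0,
      [disjoint tail1 t & tail2 t], tail1 t :|: tail2 t == head t &
      set_lexlt (tail1 t) (tail2 t)].

Definition calT : {set triple} := [set t | is_triple t].

Definition proper_triple_set (T : {set triple}) : Prop :=
  T \subset calT /\
  exists T' : {set triple}, T' \subset T /\
    (forall i, (1 < #|Js i|)%N -> exists2 t, t \in T' & head t = Js i) /\
    (forall t, t \in T' ->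
       forall J, (J = tail1 t \/ J = tail2 t) -> (1 < #|J|)%N ->
         exists2 t', (t' \in T') && (t' != t) & head t' = J).

(* feasibility in LP(v_hat), v_hat the indicator of T; y indexed by N
   (values of y outside N are irrelevant). *)
Definition feasible (R : numDomainType) (T : {set triple}) (y : {set 'I_n} -> R) : Prop :=
  (forall J, inN J -> 0 <= y J <= 1) /\
  (forall t, t \in calT ->
     let v : R := (t \in T)%:R in
     [/\ y (head t) - y (tail1 t) <= 1 - v,
         y (head t) - y (tail2 t) <= 1 - v &
         y (tail1 t) + y (tail2 t) - y (head t) <= 2 - v]).

Definition objective (R : numDomainType) (alpha : 'I_m -> R) (y : {set 'I_n} -> R) : R :=
  \sum_(J | inN J) beta alpha J * y J.

Definition eta_val (R : realDomainType) (alpha : 'I_m -> R) : R :=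
  - \sum_i Num.min 0 (alpha i).

End MLP.

From Pilot Require Import Defs.
From HB Require Import structures.
From mathcomp Require Import all_boot all_order all_algebra.
From mathcomp Require Import reals.
From mathcomp Require all_classical all_reals all_analysis.
Set Implicit Arguments. Unset Strict Implicit. Unset Printing Implicit Defensive.
Import Order.TTheory GRing.Theory Num.Theory.
Local Open Scope ring_scope.

(* The zero vector is feasible for every triple set, so the optimum is at most
   [0].  Every [J_i] lies in [N], so a feasible [y] has [0 <= y_(J_i) <= 1],
   hence [alpha_i y_(J_i) >= min(0, alpha_i)] and the objective is at least
   [-eta].  The optimum is attained: after zeroing the unconstrained
   coordinates outside [N], the feasible points form a closed subset of the
   compact cube [[0, 1]^{set 'I_n}], on which the linear objective is
   continuous. *)

Lemma min0_le_mul (R : realDomainType) (a x : R) :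
  0 <= x <= 1 -> Num.min 0 a <= a * x.
Proof.
case/andP=> x_ge0 x_le1; have [a_ge0|a_lt0] := leP 0 a.
  exact: mulr_ge0.
by rewrite -[X in X <= _]mulr1 ler_wnM2l // ltW.
Qed.

Section Feasibility.
Variables (R : realDomainType) (n m : nat) (Js : 'I_m -> {set 'I_n}).
Variables (T : {set triple n}) (alpha : 'I_m -> R).
Implicit Types (y : {set 'I_n} -> R) (J : {set 'I_n}).

Lemma inN_subset J J' : J != set0 -> J \subset J' -> inN Js J' -> inN Js J.
Proof.
move=> J_neq0 sub_J /andP[_ /existsP[i sub_J']]; rewrite /inN J_neq0.
by apply/existsP; exists i; exact: subset_trans sub_J'.
Qed.

Lemma calT_inN t : t \in calT Js ->
  [/\ inN Js (Defs.head t), inN Js (tail1 t) & inN Js (tail2 t)].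
Proof.
rewrite inE => /and5P[head_N _ t1_neq0 t2_neq0 /and3P[_ /eqP t12 _]].
by split=> //; apply: inN_subset head_N; rewrite // -t12 ?subsetUl ?subsetUr.
Qed.

Lemma feasible0 : feasible Js T (fun=> 0 : R).
Proof.
split=> [J _ | t _]; first by rewrite lexx ler01.
have v_le1 : (t \in T)%:R <= 1 :> R by case: (t \in T); rewrite ?ler01 ?lexx.
by rewrite /= subrr addr0 subrr !subr_ge0 v_le1 (le_trans v_le1) ?ler1n.
Qed.

Lemma objective0 : objective Js alpha (fun=> 0 : R) = 0.
Proof. by apply: big1 => J _; rewrite mulr0. Qed.

Definition restrictN y J : R := if inN Js J then y J else 0.

Lemma feasible_restrictN y : feasible Js T y -> feasible Js T (restrictN y).
Proof.
case=> y_N y_calT; split=> [J J_N | t t_calT]; first by rewrite /restrictN J_N y_N.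
by rewrite /restrictN; have [-> -> ->] := calT_inN t_calT; exact: y_calT.
Qed.

Lemma restrictN_ge0_le1 y J : feasible Js T y -> 0 <= restrictN y J <= 1.
Proof.
by case=> y_N _; rewrite /restrictN; case: ifP => [/y_N //|_]; rewrite lexx ler01.
Qed.

Lemma objective_restrictN y : objective Js alpha (restrictN y) = objective Js alpha y.
Proof. by apply: eq_bigr => J J_N; rewrite /restrictN J_N. Qed.

Hypothesis Js_neq0 : forall i, Js i != set0.

Lemma Js_inN i : inN Js (Js i).
Proof. by rewrite /inN Js_neq0; apply/existsP; exists i. Qed.

Lemma objective_sum_alpha y : objective Js alpha y = \sum_i alpha i * y (Js i).
Proof.
rewrite /objective /beta; under eq_bigr do rewrite mulr_suml.
rewrite (exchange_big_dep xpredT) //=; apply: eq_bigr => i _.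
rewrite (big_pred1 (Js i)) // => J /=.
by case: eqVneq => [<-|]; rewrite ?andbF // andbT Js_inN.
Qed.

Lemma objective_ge_neg_eta y : feasible Js T y -> - eta_val alpha <= objective Js alpha y.
Proof.
case=> y_N _; rewrite objective_sum_alpha /eta_val opprK.
by apply: ler_sum => i _; apply: min0_le_mul; exact: y_N (Js_inN i).
Qed.

End Feasibility.

(* Imported only locally: [classical_sets] would shadow [finset]'s [set0]. *)
Section Compactness.
Import all_classical all_reals all_analysis numFieldNormedType.Exports.
Local Open Scope classical_set_scope.

Lemma closed_continuous_le (T : topologicalType) (R : realType)
    (g : T -> R) (k : R) :
  continuous g -> closed [set x | g x <= k].
Proof.
move=> g_cont; change (closed (g @^-1` [set x | x <= k])).
by apply: preimage_closed; [move=> x _; exact: g_cont | exact: closed_le].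
Qed.

Lemma closed_continuous_ge (T : topologicalType) (R : realType)
    (g : T -> R) (k : R) :
  continuous g -> closed [set x | k <= g x].
Proof.
move=> g_cont; change (closed (g @^-1` [set x | k <= x])).
by apply: preimage_closed; [move=> x _; exact: g_cont | exact: closed_ge].
Qed.

Section ProductTopology.
Import ArrowAsProduct.
Variables (R : realType) (I : eqType).

Lemma eval_continuous (a : I) : continuous (fun y : I -> R => y a).
Proof. exact: (@proj_continuous I (fun _ => R) a). Qed.

Lemma weighted_sum_continuous (r : seq I) (P : pred I) (c : I -> R) :
  continuous (fun y : I -> R => \sum_(a <- r | P a) c a * y a).
Proof.
apply: (@continuous_big _ _ +%R 0 P add_continuous (I -> R) r
  (fun a (y : I -> R) => c a * y a)) => a _ y.
by apply: continuousM; [exact: cst_continuous | exact: eval_continuous].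
Qed.

Lemma unit_cube_compact : compact [set y : I -> R | forall a, `[0, 1] (y a)].
Proof.
by apply: (@tychonoff I (fun _ => R) (fun _ => `[0, 1])) => _; exact: segment_compact.
Qed.

Lemma diff_continuous (a b : I) : continuous (fun y : I -> R => y a - y b).
Proof.
by move=> y; apply: (@continuousB _ R^o _ (fun y => y a) (fun y => y b));
  exact: eval_continuous.
Qed.

Lemma sum_diff_continuous (a b c : I) :
  continuous (fun y : I -> R => y a + y b - y c).
Proof.
move=> y; apply: (@continuousB _ R^o _ (fun y => y a + y b) (fun y => y c));
  last exact: eval_continuous.
by apply: (@continuousD _ R^o _ (fun y => y a) (fun y => y b));
  exact: eval_continuous.
Qed.

End ProductTopology.

Section OptimumAttained.
Import ArrowAsProduct.
Variables (R : realType) (n m : nat) (Js : 'I_m -> {set 'I_n}).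
Variables (T : {set triple n}) (alpha : 'I_m -> R).

Lemma feasible_closed : closed [set y : {set 'I_n} -> R | feasible Js T y].
Proof.
pose v t : R := (t \in T)%:R.
have -> : [set y : {set 'I_n} -> R | feasible Js T y] =
  \bigcap_(J in [set J | inN Js J]) ([set y | 0 <= y J] `&` [set y | y J <= 1])
  `&` \bigcap_(t in [set t | t \in calT Js])
    ([set y | y (Defs.head t) - y (tail1 t) <= 1 - v t]
     `&` [set y | y (Defs.head t) - y (tail2 t) <= 1 - v t]
     `&` [set y | y (tail1 t) + y (tail2 t) - y (Defs.head t) <= 2 - v t]).
  rewrite predeqE => y; split=> [[y_N y_calT] | [y_N y_calT]].
    split=> [J /y_N /andP[] // | t /y_calT[]] //.
  split=> [J /y_N[] /= -> -> // | t /y_calT[[]]] /=.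
  by move=> ? ? ?; split.
apply: closedI; apply: closed_bigI => ? _.
  by apply: closedI; [apply: closed_continuous_ge | apply: closed_continuous_le];
    exact: eval_continuous.
by apply: closedI; [apply: closedI|]; apply: closed_continuous_le;
  [exact: diff_continuous | exact: diff_continuous | exact: sum_diff_continuous].
Qed.

Lemma objective_continuous : continuous (objective Js alpha).
Proof. exact: weighted_sum_continuous. Qed.

Lemma objective_min_attained :
  exists2 y, feasible Js T y &
    forall y', feasible Js T y' -> objective Js alpha y <= objective Js alpha y'.
Proof.
pose K := [set y : {set 'I_n} -> R | forall J, `[0, 1] (y J)]
          `&` [set y | feasible Js T y].
have in_K y : feasible Js T y -> K (restrictN Js y).
  move=> y_feas; split; last exact: feasible_restrictN.
  move=> J; change (restrictN Js y J \in `[0, 1]%R).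
  by rewrite in_itv /=; exact: restrictN_ge0_le1 y_feas.
have K_neq0 : K !=set0.
  by exists (restrictN Js (fun=> 0)); apply: in_K; exact: feasible0.
have K_compact : compact K := compact_closedI (@unit_cube_compact R _) feasible_closed.
have obj_cont : {within K, continuous (objective Js alpha)}.
  exact: continuous_subspaceT objective_continuous.
have [y /set_mem[_ y_feas] y_min] := compact_EVT_min K_neq0 K_compact obj_cont.
exists y => // y' y'_feas; rewrite -(objective_restrictN Js alpha y').
by apply: y_min; apply/mem_set; exact: in_K.
Qed.

End OptimumAttained.

End Compactness.

Theorem lemma1 (R : realType) (n m : nat) (alpha : 'I_m -> R)
  (Js : 'I_m -> {set 'I_n}) (HJ : forall i, Js i != set0)
  (T : {set triple n}) (HT : proper_triple_set Js T) :
  exists y : {set 'I_n} -> R,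
    feasible Js T y /\
    (forall y' : {set 'I_n} -> R, feasible Js T y' ->
       objective Js alpha y <= objective Js alpha y') /\
    - eta_val alpha <= objective Js alpha y <= 0.
Proof.
have [y y_feas y_min] := objective_min_attained Js T alpha.
exists y; split=> //; split=> //.
rewrite (objective_ge_neg_eta alpha HJ y_feas) /= -(objective0 Js alpha).
exact/y_min/feasible0.
Qed.
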